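(* Let $K$ and $L$ be $n$-element finite sets, $M=K\times L$, and let $u=(u_{kl})$ be a unitary matrix indexed by $K\times L$ all of whose entries are nonzero. Let $E\subset F(M)$ be the subspace of functions of the form $f_{kl}=a_k+b_l$ for some functions $a\in F(K)$, $b\in F(L)$ (so $\dim E=2n-1$). Then $I_uf=f$ for every $f\in E$. Consequently the multiplicity of the eigenvalue $1$ in the spectrum of the Berezin transform $I_u$ is at least $2n-1$.
   Context: For a finite set $J$, $F(J)$ denotes the space of complex-valued functions on $J$. For $f=(f_{kl})\in F(M)$, $C_uf$ and $D_uf$ are the operators on $F(K)$ with matrices $x_{kk'}=\sum_{l\in L}u_{kl}f_{kl}\bar u_{k'l}$ and $y_{kk'}=\sum_{l\in L}u_{kl}f_{k'l}\bar u_{k'l}$ respectively; these maps $F(M)\to\operatorname{End}F(K)$ are linear bijections. The Berezin transform is $I_u:=C_u^{-1}D_u:F(M)\to F(M)$; explicitly $(I_uf)_{kl}=\sum_{k'\in K,l'\in L}\frac{u_{kl'}u_{k'l}}{u_{kl}u_{k'l'}}f_{k'l'}|u_{k'l'}|^2$. *)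

From HB Require Import structures.
From mathcomp Require Import all_boot all_order all_algebra.
Set Implicit Arguments. Unset Strict Implicit. Unset Printing Implicit Defensive.
Import Order.TTheory GRing.Theory Num.Theory.
Local Open Scope ring_scope.

(* Scalars: an arbitrary numClosedFieldType C (e.g. complex numbers); x^* is
   complex conjugation.  F(J) is modelled as {ffun J -> C^o}, which is a
   finite-dimensional vector space over C (vectType C). *)

Section Berezin.
Variables (C : numClosedFieldType) (K L : finType).

Definition F (J : finType) := {ffun J -> C^o}.

Definition unitary (u : K -> L -> C) : Prop :=
  (forall k k' : K, \sum_(l : L) u k l * (u k' l)^* = (k == k')%:R) /\
  (forall l l' : L, \sum_(k : K) (u k l)^* * u k l' = (l == l')%:R).

(* C_u f and D_u f : matrices on F(K), encoded as functions on K * K. *)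
Definition Cu_fun (u : K -> L -> C) (f : F (K * L)%type) : F (K * K)%type :=
  [ffun kk => \sum_(l : L) u kk.1 l * f (kk.1, l) * (u kk.2 l)^*].
Definition Du_fun (u : K -> L -> C) (f : F (K * L)%type) : F (K * K)%type :=
  [ffun kk => \sum_(l : L) u kk.1 l * f (kk.2, l) * (u kk.2 l)^*].

Definition Cu u : 'Hom(F (K * L)%type, F (K * K)%type) := linfun (Cu_fun u).
Definition Du u : 'Hom(F (K * L)%type, F (K * K)%type) := linfun (Du_fun u).

(* Berezin transform I_u := C_u^{-1} D_u  (C_u is a linear bijection) *)
Definition Berezin u : 'End(F (K * L)%type) := ((Cu u)^-1 \o Du u)%VF.

Definition sumfun (a : K -> C) (b : L -> C) : F (K * L)%type :=
  [ffun kl => a kl.1 + b kl.2].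

End Berezin.

From HB Require Import structures.
From mathcomp Require Import all_boot all_order all_algebra ring zify.
Import Order.TTheory GRing.Theory Num.Theory.
Set Implicit Arguments. Unset Strict Implicit. Unset Printing Implicit Defensive.
Local Open Scope ring_scope.

(* Orthonormality of the rows of u makes the off-diagonal entries of C_u f and
   D_u f agree for f = a + b, while on the diagonal C_u f and D_u f coincide for
   every f; so D_u = C_u on E and I_u fixes E.  C_u is injective because the
   columns of u are orthonormal and its entries nonzero.  Finally E is the image
   of (a, b) |-> a + b, whose kernel is the line spanned by (1, -1). *)

Section Berezin.
Variables (C : numClosedFieldType) (K L : finType).
Implicit Types (u : K -> L -> C) (a : K -> C) (b : L -> C).

Lemma Cu_fun_is_linear u : linear (Cu_fun u).
Proof.
move=> c f g; apply/ffunP => kk; rewrite !ffunE scaler_sumr -big_split.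
by apply: eq_bigr => l _; rewrite !ffunE /GRing.scale /=; ring.
Qed.

Lemma Du_fun_is_linear u : linear (Du_fun u).
Proof.
move=> c f g; apply/ffunP => kk; rewrite !ffunE scaler_sumr -big_split.
by apply: eq_bigr => l _; rewrite !ffunE /GRing.scale /=; ring.
Qed.

HB.instance Definition _ u :=
  GRing.isLinear.Build C _ _ *:%R (Cu_fun u) (Cu_fun_is_linear u).
HB.instance Definition _ u :=
  GRing.isLinear.Build C _ _ *:%R (Du_fun u) (Du_fun_is_linear u).

Lemma CuE u f : Cu u f = Cu_fun u f. Proof. by rewrite lfunE. Qed.
Lemma DuE u f : Du u f = Du_fun u f. Proof. by rewrite lfunE. Qed.

Lemma lker_Cu u :
    (forall l l', \sum_(k : K) (u k l)^* * u k l' = (l == l')%:R) ->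
    (forall k l, u k l != 0) ->
  lker (Cu u) = 0%VS.
Proof.
move=> ucols unz; apply/vspaceP => f; rewrite memv_ker memv0 CuE.
apply/eqP/eqP => [/ffunP Cuf0|->]; last first.
  by apply/ffunP => kk; rewrite !ffunE big1 // => l _; rewrite ffunE mulr0 mul0r.
apply/ffunP => -[k l]; rewrite ffunE.
have row_k0 k' : \sum_l' u k l' * f (k, l') * (u k' l')^* = 0.
  by have := Cuf0 (k, k'); rewrite !ffunE.
have : u k l * f (k, l) = 0.
  transitivity (\sum_l' u k l' * f (k, l') * (l' == l)%:R).
    rewrite (bigD1 l) //= eqxx mulr1 big1 ?addr0 // => l' /negbTE ->.
    by rewrite mulr0.
  under eq_bigr => l' _ do rewrite -ucols mulr_sumr.
  rewrite exchange_big big1 // => k' _.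
  transitivity (u k' l * \sum_l' u k l' * f (k, l') * (u k' l')^*).
    by rewrite mulr_sumr; apply: eq_bigr => l' _; ring.
  by rewrite row_k0 mulr0.
by move/eqP; rewrite mulf_eq0 (negbTE (unz _ _)) => /eqP.
Qed.

Lemma Du_sumfun u a b :
    (forall k k', \sum_(l : L) u k l * (u k' l)^* = (k == k')%:R) ->
  Du u (sumfun a b) = Cu u (sumfun a b).
Proof.
move=> urows; rewrite CuE DuE; apply/ffunP => -[k k']; rewrite !ffunE /=.
have [<-|neq_kk'] := eqVneq k k'; first by [].
have entry x : \sum_l u k l * sumfun a b (x, l) * (u k' l)^* =
    a x * (k == k')%:R + \sum_l u k l * b l * (u k' l)^*.
  rewrite -urows mulr_sumr -big_split.
  by apply: eq_bigr => l _; rewrite ffunE /=; ring.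
by rewrite !entry (negbTE neq_kk') !mulr0.
Qed.

Lemma Berezin_sumfun u a b :
  unitary u -> (forall k l, u k l != 0) -> Berezin u (sumfun a b) = sumfun a b.
Proof.
move=> [urows ucols] unz; rewrite /Berezin comp_lfunE Du_sumfun //.
by rewrite lker0_lfunK ?lker_Cu.
Qed.

Definition sumfun_pair (p : (F C K * F C L)%type) : F C (K * L)%type := sumfun p.1 p.2.

Lemma sumfun_pair_is_linear : linear sumfun_pair.
Proof. by move=> c p q; apply/ffunP => kl; rewrite !ffunE /GRing.scale /=; ring. Qed.

HB.instance Definition _ :=
  GRing.isLinear.Build C _ _ *:%R sumfun_pair sumfun_pair_is_linear.

Definition sumfun_lfun : 'Hom((F C K * F C L)%type, F C (K * L)%type) := linfun sumfun_pair.

Lemma dimv_F_pair : \dim {:(F C K * F C L)%type} = (#|K| + #|L|)%N.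
Proof.
have dimF (J : finType) : dim (F C J) = (#|J| * 1)%N by [].
by rewrite dimvf /dim /= !dimF !muln1.
Qed.

Lemma lker_sumfun (k0 : K) (l0 : L) :
  (lker sumfun_lfun <= <[([ffun=> 1], [ffun=> -1]) : (F C K * F C L)%type]>)%VS.
Proof.
apply/subvP => -[p q]; rewrite memv_ker lfunE => /eqP/ffunP sum0.
have pq0 k l : p k + q l = 0 by have := sum0 (k, l); rewrite !ffunE.
apply/vlineP; exists (p k0); congr pair; apply/ffunP => x;
  rewrite !ffunE /GRing.scale /=.
  by rewrite mulr1; apply: (addIr (q l0)); rewrite !pq0.
by rewrite mulrN1; apply/eqP; rewrite -addr_eq0 addrC pq0.
Qed.

Lemma dim_limg_sumfun (k0 : K) (l0 : L) :
  ((#|K| + #|L|).-1 <= \dim (limg sumfun_lfun))%N.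
Proof.
have rank_nullity := limg_ker_dim sumfun_lfun fullv.
rewrite capfv dimv_F_pair in rank_nullity.
have := dimvS (lker_sumfun k0 l0); rewrite dim_vline.
by case: (_ != 0); lia.
Qed.

Lemma limg_sumfun_eigenspace u :
    unitary u -> (forall k l, u k l != 0) ->
  (limg sumfun_lfun <= passmx.leigenspace (Berezin u) 1)%VS.
Proof.
move=> uU unz; apply/subvP => _ /memv_imgP [p _ ->].
have -> : sumfun_lfun p = sumfun p.1 p.2 by rewrite lfunE.
rewrite memv_ker add_lfunE opp_lfunE scale_lfunE id_lfunE Berezin_sumfun //.
by rewrite scale1r subrr.
Qed.

End Berezin.

Theorem lemma2p5 (C : numClosedFieldType) (K L : finType) (n : nat)
  (hK : #|K| = n) (hL : #|L| = n) (u : K -> L -> C)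
  (hu : unitary u) (hnz : forall k l, u k l != 0) :
  (forall (a : K -> C) (b : L -> C), Berezin u (sumfun a b) = sumfun a b) /\
  ((2 * n).-1 <= \dim (passmx.leigenspace (Berezin u) 1))%N.
Proof.
split=> [a b|]; first exact: Berezin_sumfun.
case: n hK hL => [//|n] hK hL.
have [k0 _] : exists k0 : K, k0 \in K by apply/card_gt0P; rewrite hK.
have [l0 _] : exists l0 : L, l0 \in L by apply/card_gt0P; rewrite hL.
have := dimvS (limg_sumfun_eigenspace hu hnz).
by have := dim_limg_sumfun C k0 l0; rewrite hK hL addnn -mul2n; apply: leq_trans.
Qed.
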